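(* For every finite group $G$, every block of the power semigroup $\mathcal{P}(G)$ divides $G$. Consequently, for every pseudovariety of groups $\mathbf{H}$, one has $\mathbf{PH}\subseteq\mathbf{BH}$.
   Context: For a finite semigroup $S$, $\mathcal{P}(S)$ is the semigroup of all subsets of $S$ under $AB=\{ab: a\in A, b\in B\}$. A semigroup $A$ divides $B$ if $A$ is a homomorphic image of a subsemigroup of $B$. Blocks: let $U$ be the union of all subgroups of a finite semigroup $S$ and let $\rho$ be the smallest equivalence relation on $U$ containing the restrictions to $U$ of Green's relations $\mathcal{L}$ and $\mathcal{R}$. A block of $S$ is the Rees quotient $T/I$, where $T$ is the subsemigroup of $S$ generated by a $\rho$-class and $I$ is the ideal of $T$ consisting of the elements of $T$ not lying in the $\mathcal{D}$-class (of $S$) of the generators. For a pseudovariety of groups $\mathbf{H}$: $\mathbf{PH}$ is the pseudovariety of semigroups generated by all $\mathcal{P}(G)$ with $G\in\mathbf{H}$, and $\mathbf{BH}$ is the class of all finite semigroups all of whose blocks belong to $\mathbf{H}$ (blocks here being regarded as members of $\mathbf{H}$ when they divide a group of $\mathbf{H}$, i.e. $\mathbf{BV}$ is the class of finite semigroups whose blocks lie in $\mathbf{V}$, for $\mathbf{V}$ the pseudovariety considered). *)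

From mathcomp Require Import all_boot all_fingroup.
Set Implicit Arguments. Unset Strict Implicit. Unset Printing Implicit Defensive.

(* Most definitions below only need the operation;
   associativity is assumed where the paper assumes a semigroup. *)

Section Semigroup.
Variables (S : finType) (op : S -> S -> S).

(* x lies in S^1 y, resp. y S^1 *)
Definition lmult (x y : S) : bool := (x == y) || [exists a, op a y == x].
Definition rmult (x y : S) : bool := (x == y) || [exists a, op y a == x].

Definition greenL (x y : S) : bool := lmult x y && lmult y x.
Definition greenR (x y : S) : bool := rmult x y && rmult y x.
Definition greenD (x y : S) : bool := [exists z, greenL x z && greenR z y].

Definition is_subgroup (A : {set S}) : bool :=
  [forall a in A, forall b in A, op a b \in A] &&
  [exists e in A, [forall a in A, (op e a == a) && (op a e == a)] &&
                  [forall a in A, exists b in A, (op a b == e) && (op b a == e)]].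

Definition grpU : {set S} := [set x | [exists A : {set S}, (x \in A) && is_subgroup A]].

Definition rho_edge : rel S :=
  [rel x y | [&& x \in grpU, y \in grpU & greenL x y || greenR x y]].
Definition rho (x y : S) : bool := [&& x \in grpU, y \in grpU & connect rho_edge x y].

Definition rho_class (x : S) : {set S} := [set y | rho x y].

Definition op_closed (B : {set S}) : bool := [forall a in B, forall b in B, op a b \in B].
Definition gen_subsemigroup (C : {set S}) : {set S} :=
  \bigcap_(B : {set S} | op_closed B && (C \subset B)) B.

Lemma gen_subsemigroup_closed C a b :
  a \in gen_subsemigroup C -> b \in gen_subsemigroup C -> op a b \in gen_subsemigroup C.
Proof.
move=> /bigcapP Ha /bigcapP Hb; apply/bigcapP => B HB.
have aB := Ha B HB; have bB := Hb B HB.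
by case/andP: HB => /forall_inP /(_ a aB) /forall_inP /(_ b bB).
Qed.

(* The block determined by x \in U:  T = <rho-class of x>,
   I = elements of T not D-related (in S) to x, block = Rees quotient T/I. *)
Definition blockT (x : S) : {set S} := gen_subsemigroup (rho_class x).
Definition blockI (x : S) : {set S} := [set y in blockT x | ~~ greenD y x].

(* Concrete model of the Rees quotient T/I: elements of T \ I together with
   one fixed representative of I (which plays the role of the zero, present
   only when I is nonempty). *)
Definition rees_pred (x : S) : pred S :=
  [pred y | (y \in blockT x) && ((y \notin blockI x) || (Some y == [pick z in blockI x]))].

Definition block_car (x : S) : finType := {y : S | rees_pred x y}.

Definition rees_collapse (x p : S) : S :=
  if p \in blockI x then odflt p [pick z in blockI x] else p.

Lemma rees_collapseP x p : p \in blockT x -> rees_pred x (rees_collapse x p).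
Proof.
move=> pT; rewrite /rees_collapse /rees_pred inE /=; case: ifP => pI.
  case: pickP => [z zI|/(_ p)]; last by rewrite pI.
  by rewrite eqxx orbT andbT; move: zI; rewrite inE => /andP[].
by rewrite pT pI.
Qed.

Definition block_op (x : S) (u v : block_car x) : block_car x :=
  exist _ (rees_collapse x (op (sval u) (sval v)))
    (rees_collapseP (gen_subsemigroup_closed (andP (svalP u)).1 (andP (svalP v)).1)).

End Semigroup.

Definition sdivides (A : finType) (opA : A -> A -> A) (B : finType) (opB : B -> B -> B) : Prop :=
  exists V : {set B},
    op_closed opB V /\
    exists f : B -> A,
      (forall u v, u \in V -> v \in V -> f (opB u v) = opA (f u) (f v)) /\
      (forall a : A, exists2 u, u \in V & f u = a).

Definition pow_op (gT : finGroupType) (A B : {set gT}) : {set gT} := (A * B)%g.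

(* Pseudovarieties of groups, as classes of finite groups (whole carriers of
   finGroupTypes): nonempty, closed under division and binary direct products. *)
Definition group_pseudovariety (H : finGroupType -> Prop) : Prop :=
  [/\ exists gT, H gT,
      (forall gT rT : finGroupType, H gT -> sdivides (@mulg rT) (@mulg gT) -> H rT) &
      (forall gT1 gT2 : finGroupType, H gT1 -> H gT2 -> H (gT1 * gT2)%type)].

Definition powprod_car (n : nat) (Gs : 'I_n -> finGroupType) : finType :=
  {dffun forall i : 'I_n, {set Gs i}}.
Definition powprod_op (n : nat) (Gs : 'I_n -> finGroupType)
    (f g : powprod_car Gs) : powprod_car Gs :=
  [ffun i => pow_op (f i) (g i)].

Definition inPH (H : finGroupType -> Prop) (S : finType) (op : S -> S -> S) : Prop :=
  exists n (Gs : 'I_n -> finGroupType),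
    (forall i, H (Gs i)) /\ sdivides op (@powprod_op n Gs).

Definition inBH (H : finGroupType -> Prop) (S : finType) (op : S -> S -> S) : Prop :=
  forall x : S, x \in grpU op ->
    exists gT : finGroupType, H gT /\ sdivides (@block_op S op x) (@mulg gT).

From mathcomp Require Import all_boot all_fingroup zify.
Set Implicit Arguments. Unset Strict Implicit. Unset Printing Implicit Defensive.
Local Open Scope group_scope.

(* The idempotents of a power semigroup P(G) are the empty set and the
   subgroups of G, and for two of them E, F the powers of EF and of FE both
   end up equal to the subgroup generated by E and F.  This property passes
   to every divisor S of a product of power semigroups, and it forces
   L- or R-related idempotents of S to coincide: the rho-class of an element
   x of a subgroup stays inside the maximal subgroup H_e containing x, so the
   block of x is a subsemigroup of H_e with no zero.
   To see that H_e divides the product of the groups, pull it back to the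
   product of power semigroups and choose there an idempotent F, minimal in
   the natural order.  An element m of the preimage with FmF = m has F as its
   idempotent power, so each component of m is a coset g_i F_i with g_i
   normalizing F_i, and u |-> (pi_i(u) F_i)_i maps a subsemigroup of any
   group covering the product onto H_e.  For P(G) itself there is a single
   factor, covered by G. *)

Lemma op_closedP (S : finType) (op : S -> S -> S) (B : {set S}) :
  reflect {in B &, forall a b, op a b \in B} (op_closed op B).
Proof.
apply: (iffP forall_inP) => [cB a b aB bB | cB a aB].
  by move/forall_inP: (cB a aB); apply.
by apply/forall_inP => b; apply: cB.
Qed.

Lemma op_closedM (S : finType) (op : S -> S -> S) (B : {set S}) a b :
  op_closed op B -> a \in B -> b \in B -> op a b \in B.
Proof. by move/op_closedP; apply. Qed.

Section Subsemigroups.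
Variables (S : finType) (op : S -> S -> S).

Lemma gen_subsemigroup_min (C B : {set S}) :
  op_closed op B -> C \subset B -> gen_subsemigroup op C \subset B.
Proof. by move=> cB sCB; apply: bigcap_inf; rewrite cB sCB. Qed.

Lemma gen_subsemigroup_ext (C : {set S}) : C \subset gen_subsemigroup op C.
Proof. by apply/subsetP => y yC; apply/bigcapP => B /andP[_ /subsetP]; apply. Qed.

Lemma mem_blockT (x : S) : x \in grpU op -> x \in blockT op x.
Proof.
move=> xU; apply: (subsetP (gen_subsemigroup_ext _)).
by rewrite inE /rho xU connect0.
Qed.

Lemma connect_stable (e : rel S) (P : pred S) :
  (forall u w, e u w -> P u -> P w) -> forall x y, connect e x y -> P x -> P y.
Proof.
move=> eP x y /connectP[p + ->]; elim: p x => //= z p IH x /andP[exz pz] Px.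
exact: IH pz (eP _ _ exz Px).
Qed.

(* The Rees quotient collapses nothing when no element of [T] falls out of
   the D-class of [x]; a division onto [T] is then a division onto the block. *)
Lemma block_sdivides (x : S) (B : finType) (opB : B -> B -> B) (V : {set B})
    (h : B -> S) (u0 : B) :
  u0 \in V -> op_closed opB V ->
  (forall y, y \in blockT op x -> greenD op y x) ->
  (forall u, u \in V -> h u \in blockT op x) ->
  {in V &, forall u v, h (opB u v) = op (h u) (h v)} ->
  (forall y, y \in blockT op x -> exists2 u, u \in V & h u = y) ->
  sdivides (@block_op S op x) opB.
Proof.
move=> u0V /op_closedP Vc TD hT hM hon.
have noI y : y \in blockT op x -> y \notin blockI op x.
  by move=> yT; rewrite inE yT TD.
have reesT y : y \in blockT op x -> rees_pred op x y.
  by move=> yT; rewrite /rees_pred inE /= yT noI.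
pose f u : block_car op x := insubd (exist _ (h u0) (reesT _ (hT _ u0V))) (h u).
have fE u : u \in V -> val (f u) = h u.
  by move=> uV; rewrite /f insubdK //; exact: (reesT _ (hT _ uV)).
exists V; split; first exact/op_closedP.
exists f; split => [u v uV vV | a].
  apply: val_inj; rewrite /= !fE ?Vc // hM // /rees_collapse.
  by rewrite (negbTE (noI _ _)) // -hM // hT ?Vc.
have aT : val a \in blockT op x by case/andP: (svalP a).
by have [u uV hu] := hon _ aT; exists u => //; apply: val_inj; rewrite fE.
Qed.

End Subsemigroups.

Section Powers.
Variables (T : finType) (op : T -> T -> T).
Hypothesis opA : associative op.

(* [spow a k] is a^(k+1): a semigroup need not have an identity. *)
Definition spow (a : T) (k : nat) : T := iter k (op a) a.

Lemma spowD a i j : op (spow a i) (spow a j) = spow a (i + j).+1.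
Proof. by elim: i => [|i IH] //=; rewrite -opA IH. Qed.

Lemma spow_closed (B : {set T}) a k : op_closed op B -> a \in B -> spow a k \in B.
Proof. by move=> /op_closedP cB aB; elim: k => [|k IH] //=; apply: cB. Qed.

Lemma spow_idem e k : op e e = e -> spow e k = e.
Proof. by move=> ee; elim: k => [|k IH] //=; rewrite IH. Qed.

Lemma spow_shift a i j t : spow a i = spow a j -> spow a (i + t) = spow a (j + t).
Proof. by move=> E; elim: t => [|t IH]; rewrite ?addn0 // !addnS /= IH. Qed.

(* Some power of [a] repeats, with period [d]; the power of index
   [(i+1)d - 1] then lies in the periodic part and squares to itself. *)
Lemma exists_idem_spow a : exists k, op (spow a k) (spow a k) = spow a k.
Proof.
have /injectivePn[i [j neq_ij Eij]] : ~~ injectiveb (fun i : 'I_#|T|.+1 => spow a i).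
  by apply/injectiveP => /leq_card; rewrite card_ord ltnn.
have [i' [d [d_gt0 Ed]]] : exists i' d, 0 < d /\ spow a i' = spow a (i' + d).
  case: (ltngtP i j) neq_ij => [ij|ji|/val_inj->]; last by rewrite eqxx.
  - by exists i, (j - i); rewrite subn_gt0 subnKC ?(ltnW ij).
  - by exists j, (i - j); rewrite subn_gt0 subnKC ?(ltnW ji).
have period c t : spow a (i' + t + c * d) = spow a (i' + t).
  elim: c => [|c IH]; first by rewrite addn0.
  have -> : i' + t + c.+1 * d = i' + d + (t + c * d) by rewrite mulSn; lia.
  by rewrite -(spow_shift _ Ed) addnA IH.
exists (i'.+1 * d).-1; rewrite spowD.
have le_i' : i' <= (i'.+1 * d).-1 by nia.
have -> : ((i'.+1 * d).-1 + (i'.+1 * d).-1).+1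
          = i' + ((i'.+1 * d).-1 - i') + i'.+1 * d by nia.
by rewrite period subnKC.
Qed.

Lemma spow_morph (T' : finType) (op' : T' -> T' -> T') (V : {set T}) (phi : T -> T') a k :
  op_closed op V -> {in V &, forall u v, phi (op u v) = op' (phi u) (phi v)} ->
  a \in V -> phi (spow a k) = iter k (op' (phi a)) (phi a).
Proof.
move=> cV phiM aV; elim: k => [|k IH] //=.
by rewrite phiM ?spow_closed // IH.
Qed.

End Powers.

Section MaximalSubgroup.
Variables (S : finType) (op : S -> S -> S).
Hypothesis opA : associative op.

Definition maxsubgroup (e : S) : {set S} :=
  [set y | [&& op e y == y, op y e == y & [exists z, (op y z == e) && (op z y == e)]]].

Lemma maxsubgroupP e y :
  reflect [/\ op e y = y, op y e = y & exists z, op y z = e /\ op z y = e]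
          (y \in maxsubgroup e).
Proof.
rewrite inE; apply: (iffP and3P) => [[/eqP-> /eqP-> /existsP[z /andP[/eqP yz /eqP zy]]]|].
  by split=> //; exists z.
case=> -> -> [z [yz zy]]; rewrite !eqxx; split=> //.
by apply/existsP; exists z; rewrite yz zy eqxx.
Qed.

Lemma maxsubgroup_id e : op e e = e -> e \in maxsubgroup e.
Proof. by move=> ee; apply/maxsubgroupP; split=> //; exists e. Qed.

Lemma maxsubgroup_closed e : op_closed op (maxsubgroup e).
Proof.
apply/op_closedP => a b /maxsubgroupP[ea ae [za [aza zaa]]].
case/maxsubgroupP => eb be [zb [bzb zbb]].
apply/maxsubgroupP; split; [by rewrite opA ea | by rewrite -opA be |].
exists (op zb za); split.
  by rewrite -opA (opA b) bzb (opA a) ae aza.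
by rewrite -opA (opA za) zaa eb zbb.
Qed.

Lemma maxsubgroup_idem e g : g \in maxsubgroup e -> op g g = g -> g = e.
Proof. by case/maxsubgroupP => eg _ [z [_ zg]] gg; rewrite -zg -{2}gg opA zg eg. Qed.

Lemma maxsubgroup_rid e u f : u \in maxsubgroup e -> op u f = u -> op e f = e.
Proof. by case/maxsubgroupP => _ _ [z [_ zu]] uf; rewrite -zu -opA uf. Qed.

Lemma maxsubgroup_lid e u f : u \in maxsubgroup e -> op f u = u -> op f e = e.
Proof. by case/maxsubgroupP => _ _ [z [uz _]] fu; rewrite -uz opA fu. Qed.

Lemma maxsubgroup_greenD e x y :
  x \in maxsubgroup e -> y \in maxsubgroup e -> greenD op y x.
Proof.
case/maxsubgroupP => ex _ [x' [xx' _]] /maxsubgroupP[ey _ [z [yz _]]].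
apply/existsP; exists y; rewrite /greenL /lmult eqxx /=.
apply/andP; split; apply/orP; right; apply/existsP.
  by exists (op x' y); rewrite opA xx' ey.
by exists (op z x); rewrite opA yz ex.
Qed.

Lemma grpU_maxsubgroup x :
  x \in grpU op -> exists2 e, op e e = e & x \in maxsubgroup e.
Proof.
rewrite inE => /existsP[A /andP[xA /andP[_ /exists_inP[e eA /andP[unitA invA]]]]].
have /andP[/eqP ee _] := forall_inP unitA e eA.
have /andP[/eqP ex /eqP xe] := forall_inP unitA x xA.
have /exists_inP[z _ /andP[/eqP xz /eqP zx]] := forall_inP invA x xA.
by exists e => //; apply/maxsubgroupP; split=> //; exists z.
Qed.

Lemma lmult_rid u w f : lmult op u w -> op w f = w -> op u f = u.
Proof. by case/orP => [/eqP-> //|/existsP[a /eqP<-]] wf; rewrite -opA wf. Qed.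

Lemma rmult_lid u w f : rmult op u w -> op f w = w -> op f u = u.
Proof. by case/orP => [/eqP-> //|/existsP[a /eqP<-]] fw; rewrite opA fw. Qed.

(* [(ef)^r = (fe)^r] for some [r]: this holds in power semigroups of groups,
   and it forces a rho-class to stay in one maximal subgroup. *)
Definition idem_swap_power : Prop :=
  forall e f, op e e = e -> op f f = f ->
    exists r, spow op (op e f) r = spow op (op f e) r.

Hypothesis idem_swap : idem_swap_power.

Lemma idem_eq_of_greenL e f :
  op e e = e -> op f f = f -> op e f = e -> op f e = f -> e = f.
Proof. by move=> ee ff ef fe; have [r] := idem_swap ee ff; rewrite ef fe !spow_idem. Qed.

Lemma idem_eq_of_greenR e f :
  op e e = e -> op f f = f -> op f e = e -> op e f = f -> e = f.
Proof. by move=> ee ff fe ef; have [r] := idem_swap ee ff; rewrite ef fe !spow_idem. Qed.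

Lemma rho_edge_maxsubgroup e u w :
  op e e = e -> u \in maxsubgroup e -> rho_edge op u w -> w \in maxsubgroup e.
Proof.
move=> ee uH /and3P[_ /grpU_maxsubgroup[f ff wH] /orP[]] /andP[uw wu].
  have ef : op e f = e.
    by apply: maxsubgroup_rid uH _; apply: lmult_rid uw _; case/maxsubgroupP: wH.
  have fe : op f e = f.
    by apply: maxsubgroup_rid wH _; apply: lmult_rid wu _; case/maxsubgroupP: uH.
  by rewrite (idem_eq_of_greenL ee ff ef fe).
have fe : op f e = e.
  by apply: maxsubgroup_lid uH _; apply: rmult_lid uw _; case/maxsubgroupP: wH.
have ef : op e f = f.
  by apply: maxsubgroup_lid wH _; apply: rmult_lid wu _; case/maxsubgroupP: uH.
by rewrite (idem_eq_of_greenR ee ff fe ef).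
Qed.

Lemma blockT_sub_maxsubgroup e x :
  op e e = e -> x \in maxsubgroup e -> blockT op x \subset maxsubgroup e.
Proof.
move=> ee xH; apply: gen_subsemigroup_min; first exact: maxsubgroup_closed.
apply/subsetP => y; rewrite inE => /and3P[_ _ xy].
exact: connect_stable (fun u w uw uH => rho_edge_maxsubgroup ee uH uw) _ _ xy xH.
Qed.

End MaximalSubgroup.

Section PowerSemigroup.
Variable gT : finGroupType.
Implicit Types A B C K : {set gT}.

Lemma mul_set0l A : set0 * A = set0.
Proof. by apply/setP => y; rewrite inE; apply/mulsgP => [[a b]]; rewrite inE. Qed.

Lemma mul_set0r A : A * set0 = set0.
Proof. by apply/setP => y; rewrite inE; apply/mulsgP => [[a b _]]; rewrite inE. Qed.

Lemma spow_pow_op C k : spow (@pow_op gT) C k = C ^+ k.+1.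
Proof. by elim: k => [|k IH] //=; rewrite IH. Qed.

Lemma idem_group_set A : A * A = A -> A != set0 -> group_set A.
Proof.
move=> AA /set0Pn[a aA]; rewrite /group_set AA subxx andbT.
have aXA k : a ^+ k.+1 \in A.
  by elim: k => [|k IH]; rewrite ?expg1 // expgS -AA mem_mulg.
by rewrite -(expg_order a); case: #[a] (order_gt0 a) => // k _; apply: aXA.
Qed.

Lemma one_in_idem A : A * A = A -> A != set0 -> 1 \in A.
Proof. by move=> AA /(idem_group_set AA)/andP[]. Qed.

Lemma lcoset_mul K g h : K * K = K -> h \in 'N(K) -> (g *: K) * (h *: K) = (g * h) *: K.
Proof.
move=> KK /normP hN.
have Kh : K :* h = h *: K by rewrite -{2}hN conjsgE lcosetKV.
by rewrite -mulgA [K * _]mulgA Kh -mulgA KK lcosetM.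
Qed.

Lemma expgs_gen C : 1 \in C -> exists m, forall r, m <= r -> C ^+ r = <<C>>.
Proof.
move=> C1; have [m Em] := gen_expgs C; rewrite (setUidPr _) ?sub1set // in Em.
have Cr_gen r : C ^+ r \subset <<C>>.
  by elim: r => [|r IH]; rewrite ?sub1G // expgS mul_subG ?subset_gen.
have Cr_mono r t : C ^+ r \subset C ^+ (r + t).
  elim: t => [|t IH]; rewrite ?addn0 // addnS expgS (subset_trans IH) //.
  by rewrite -{1}[C ^+ _]mul1g mulSg ?sub1set.
exists m => r le_mr; apply/eqP; rewrite eqEsubset Cr_gen Em.
by rewrite -(subnKC le_mr) Cr_mono.
Qed.

(* Both [AB] and [BA] contain [1], [A] and [B], so their powers eventually
   coincide with the subgroup generated by [A] and [B]. *)
Lemma pow_idem_swap A B : A * A = A -> B * B = B ->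
  exists R, forall r, R <= r -> (A * B) ^+ r = (B * A) ^+ r.
Proof.
move=> AA BB.
have [->|A0] := eqVneq A set0; first by exists 0 => r; rewrite mul_set0l mul_set0r.
have [->|B0] := eqVneq B set0; first by exists 0 => r; rewrite mul_set0l mul_set0r.
have A1 := one_in_idem AA A0; have B1 := one_in_idem BB B0.
have [m1 E1] : exists m, forall r, m <= r -> (A * B) ^+ r = <<A * B>>.
  by apply: expgs_gen; rewrite -[1]mulg1 mem_mulg.
have [m2 E2] : exists m, forall r, m <= r -> (B * A) ^+ r = <<B * A>>.
  by apply: expgs_gen; rewrite -[1]mulg1 mem_mulg.
have subMr (X Y : {set gT}) : 1 \in Y -> X \subset X * Y.
  by move=> Y1; rewrite -{1}[X]mulg1 mulgS ?sub1set.
have subMl (X Y : {set gT}) : 1 \in Y -> X \subset Y * X.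
  by move=> Y1; rewrite -{1}[X]mul1g mulSg ?sub1set.
have eG : <<A * B>> = <<B * A>>.
  apply/eqP; rewrite eqEsubset !gen_subG !mul_subG //;
    by apply: subset_trans (subset_gen _); rewrite ?subMr ?subMl.
exists (m1 + m2) => r le_r; rewrite E1 ?E2 ?eG //; apply: leq_trans le_r.
  by rewrite leq_addl.
by rewrite leq_addr.
Qed.

(* Going down in the natural order an idempotent of P(G) either becomes empty
   or grows, so this weight strictly decreases. *)
Definition set_weight A : nat := if A == set0 then 0 else #|gT|.+1 - #|A|.

Lemma pow_idem_below A B : B * B = B -> B * A = B ->
  set_weight B <= set_weight A ?= iff (B == A).
Proof.
move=> BB BA; rewrite /set_weight.
have [->|B0] := eqVneq B set0.
  by rewrite eq_sym; apply/leqifP; case: eqP; rewrite // subn_gt0 ltnS max_card.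
have sAB : A \subset B.
  by apply/subsetP => a aA; rewrite -BA -[a]mul1g mem_mulg ?one_in_idem.
have [A0|A0] := eqVneq A set0; first by rewrite -BA A0 mul_set0r eqxx in B0.
rewrite eq_sym eqEcard sAB /=; apply/leqifP.
have [leBA | ltAB] := leqP #|B| #|A|.
  by apply/eqP; congr (_ - _); apply/eqP; rewrite eqn_leq leBA subset_leq_card.
by rewrite ltn_sub2l // ltnS max_card.
Qed.

Lemma coset_of_power_idem K A k : K * K = K -> K * A = A -> A * K = A ->
  A ^+ k.+1 = K -> exists2 g, g \in 'N(K) & A = g *: K.
Proof.
move=> KK KA AK AkK.
have [K0|K0] := eqVneq K set0.
  by exists 1; rewrite ?group1 // -KA K0 !mul_set0l lcoset1.
have [A0|/set0Pn[g gA]] := eqVneq A set0.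
  by move: K0; rewrite -AkK A0 expgS mul_set0l eqxx.
have leAK : #|A| <= #|K|.
  rewrite -AkK; clear AkK; elim: k => [|k IH]; first by rewrite expg1.
  apply: leq_trans IH _; rewrite [A ^+ k.+2]expgS -(card_lcoset _ g).
  by rewrite subset_leq_card ?mulSg ?sub1set.
have AgK : A = g *: K.
  by apply/eqP; rewrite eq_sym eqEcard card_lcoset leAK -AK mulSg ?sub1set.
have KgA : K :* g = A.
  by apply/eqP; rewrite eqEcard card_rcoset AgK card_lcoset leqnn -AgK -KA mulgS ?sub1set.
by exists g => //; apply/normP; rewrite conjsgE KgA AgK lcosetK.
Qed.

End PowerSemigroup.

Section PowerProduct.
Variables (n : nat) (Gs : 'I_n -> finGroupType).
Local Notation W := (powprod_car Gs).
Local Notation opW := (@powprod_op n Gs).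

Lemma powprod_opA : associative opW.
Proof. by move=> a b c; apply/ffunP => i; rewrite !ffunE /pow_op mulgA. Qed.

Lemma powprod_spow (m : W) k i : spow opW m k i = m i ^+ k.+1.
Proof. by rewrite -spow_pow_op; elim: k => [|k IH] //=; rewrite ffunE IH. Qed.

Lemma powprod_idem_swap : idem_swap_power opW.
Proof.
move=> E F /ffunP EE /ffunP FF.
have EEi i : E i * E i = E i by have := EE i; rewrite ffunE.
have FFi i : F i * F i = F i by have := FF i; rewrite ffunE.
have /fin_all_exists[R ER] i := pow_idem_swap (EEi i) (FFi i).
exists (\max_i R i); apply/ffunP => i; rewrite !powprod_spow !ffunE.
by apply: ER; rewrite ltnW // ltnS (leq_bigmax i).
Qed.

Definition powprod_weight (m : W) : nat := \sum_i set_weight (m i).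

Lemma powprod_idem_below (E F : W) : opW E E = E -> opW E F = E ->
  powprod_weight E <= powprod_weight F ?= iff (E == F).
Proof.
move=> /ffunP EE /ffunP EF.
have -> : (E == F) = [forall i in predT, E i == F i].
  by apply/eqP/forall_inP => [-> //|EiF]; apply/ffunP => i; apply/eqP/EiF.
apply: leqif_sum => i _; apply: pow_idem_below.
  by have := EE i; rewrite ffunE.
by have := EF i; rewrite ffunE.
Qed.

End PowerProduct.

Section Division.
Variables (T : finType) (opT : T -> T -> T) (S : finType) (op : S -> S -> S).
Hypothesis opTA : associative opT.
Variables (V : {set T}) (phi : T -> S).
Hypothesis Vc : op_closed opT V.
Hypothesis phiM : {in V &, forall u v, phi (opT u v) = op (phi u) (phi v)}.
Hypothesis phi_onto : forall a, exists2 u, u \in V & phi u = a.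

Lemma idem_lift e : op e e = e -> exists E, [/\ E \in V, opT E E = E & phi E = e].
Proof.
move=> ee; have [a aV ae] := phi_onto e; have [k kE] := exists_idem_spow opTA a.
exists (spow opT a k); split; rewrite ?spow_closed //.
by rewrite (spow_morph _ Vc phiM aV) ae -/(spow op e k) spow_idem.
Qed.

Lemma idem_swap_power_div : idem_swap_power opT -> idem_swap_power op.
Proof.
move=> swapT e f ee ff.
have [E [EV EE <-]] := idem_lift ee; have [F [FV FF <-]] := idem_lift ff.
have [r Er] := swapT E F EE FF; exists r.
by have := congr1 phi Er; rewrite !(spow_morph _ Vc phiM) ?op_closedM // !phiM.
Qed.

End Division.

(* [Gam] stands in for the direct product of the [Gs i], which is not
   available as a group type when the factors are given by a family. *)
Definition covers_product (Gam : finGroupType) n (Gs : 'I_n -> finGroupType)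
    (pi : forall i, Gam -> Gs i) : Prop :=
  (forall i, {morph pi i : a b / a * b}) /\
  (forall g : forall i, Gs i, exists u, forall i, pi i u = g i).

Section MaxSubgroupDivision.
Variables (S : finType) (op : S -> S -> S).
Hypothesis opA : associative op.
Variables (n : nat) (Gs : 'I_n -> finGroupType).
Local Notation W := (powprod_car Gs).
Local Notation opW := (@powprod_op n Gs).
Variables (V : {set W}) (phi : W -> S).
Hypothesis Vc : op_closed opW V.
Hypothesis phiM : {in V &, forall u v, phi (opW u v) = op (phi u) (phi v)}.
Hypothesis phi_onto : forall a, exists2 u, u \in V & phi u = a.
Variables (Gam : finGroupType) (pi : forall i, Gam -> Gs i).
Hypothesis piP : covers_product pi.
Variable e : S.
Hypothesis ee : op e e = e.

Let M := [set w in V | phi w \in maxsubgroup op e].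

Lemma mem_preim w : (w \in M) = (w \in V) && (phi w \in maxsubgroup op e).
Proof. by rewrite [LHS]inE. Qed.

Lemma preim_maxsubgroup_closed : op_closed opW M.
Proof.
apply/op_closedP => a b; rewrite !mem_preim => /andP[aV aH] /andP[bV bH].
by rewrite (op_closedM Vc) // phiM // (op_closedM (maxsubgroup_closed opA e)).
Qed.

Lemma exists_min_weight_idem : exists F, [/\ F \in M, opW F F = F &
  forall E, E \in M -> opW E E = E -> powprod_weight F <= powprod_weight E].
Proof.
have [E0 [E0V E0E0 phiE0]] := idem_lift (@powprod_opA n Gs) Vc phiM phi_onto ee.
have E0M : E0 \in M by rewrite mem_preim E0V phiE0 maxsubgroup_id.
have [F /andP[FM /eqP FF] Fmin] :=
  @arg_minnP _ E0 (fun E => (E \in M) && (opW E E == E)) (@powprod_weight n Gs)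
    (introT andP (conj E0M (introT eqP E0E0))).
by exists F; split=> // E EM EE; apply: Fmin; rewrite EM EE eqxx.
Qed.

Section MinimalIdempotent.
Variable F : W.
Hypotheses (FM : F \in M) (FF : opW F F = F).
Hypothesis Fmin : forall E, E \in M -> opW E E = E ->
  powprod_weight F <= powprod_weight E.

Lemma phi_min_idem : phi F = e.
Proof.
move: FM; rewrite mem_preim => /andP[FV FH].
by apply: (maxsubgroup_idem opA FH); rewrite -phiM // FF.
Qed.

(* The idempotent power of an [m] fixed by [F] lies below [F] in the natural
   order, hence equals [F] by minimality; componentwise, [m] is a coset. *)
Lemma min_idem_cosets m : m \in M -> opW F m = m -> opW m F = m ->
  forall i, exists2 g, g \in 'N(F i) & m i = g *: F i.
Proof.
move=> mM Fm mF i; have [k kE] := exists_idem_spow (@powprod_opA n Gs) m.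
have EM : spow opW m k \in M by rewrite spow_closed ?preim_maxsubgroup_closed.
have EF : opW (spow opW m k) F = spow opW m k.
  by elim: k {kE EM} => [|k IH] //=; rewrite -powprod_opA IH.
have /eqP EFeq : spow opW m k == F by rewrite -(geq_leqif (powprod_idem_below kE EF)) Fmin.
have comp (a b c : W) : opW a b = c -> a i * b i = c i.
  by move/ffunP/(_ i); rewrite ffunE.
apply: (coset_of_power_idem (k := k)) (comp _ _ _ FF) (comp _ _ _ Fm) (comp _ _ _ mF) _.
by rewrite -(powprod_spow m k) EFeq.
Qed.

Definition coset_tuple (u : Gam) : W := [ffun i => pi i u *: F i].
Definition normalizes_min_idem (u : Gam) : bool := [forall i, pi i u \in 'N(F i)].

Lemma coset_tupleM u v : normalizes_min_idem v ->
  coset_tuple (u * v) = opW (coset_tuple u) (coset_tuple v).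
Proof.
move=> /forallP vN; apply/ffunP => i; rewrite !ffunE piP.1 /pow_op lcoset_mul ?vN //.
by move/ffunP/(_ i): FF; rewrite ffunE.
Qed.

Let V' := [set u | normalizes_min_idem u && (coset_tuple u \in M)].

Lemma mem_cosets u : (u \in V') = normalizes_min_idem u && (coset_tuple u \in M).
Proof. by rewrite [LHS]inE. Qed.

Lemma cosets_closed : op_closed *%g V'.
Proof.
apply/op_closedP => u v; rewrite !mem_cosets => /andP[/forallP uN uM] /andP[vN vM].
rewrite coset_tupleM // (op_closedM preim_maxsubgroup_closed) // andbT.
by apply/forallP => i; rewrite piP.1 groupM // (forallP vN).
Qed.

(* A preimage [m] of [y] is replaced by [FmF], still a preimage since [phi F]
   is the identity [e] of the maximal subgroup. *)
Lemma cosets_onto y : y \in maxsubgroup op e ->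
  exists2 u, u \in V' & phi (coset_tuple u) = y.
Proof.
move=> yH; have [m mV phim] := phi_onto y.
have FV : F \in V by move: FM; rewrite mem_preim => /andP[].
pose m' := opW (opW F m) F.
have m'V : m' \in V by rewrite !(op_closedM Vc).
have phim' : phi m' = y.
  case/maxsubgroupP: yH => ey ye _.
  by rewrite !phiM ?(op_closedM Vc) // phi_min_idem phim ey ye.
have m'M : m' \in M by rewrite mem_preim m'V phim' yH.
have Fm' : opW F m' = m' by rewrite /m' !powprod_opA FF.
have m'F : opW m' F = m' by rewrite /m' -powprod_opA FF.
have /fin_all_exists2[g gN m'g] := min_idem_cosets m'M Fm' m'F.
have [u ug] := piP.2 g.
have cu : coset_tuple u = m' by apply/ffunP => i; rewrite ffunE ug m'g.
exists u; last by rewrite cu.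
by rewrite mem_cosets cu m'M andbT; apply/forallP => i; rewrite ug gN.
Qed.

End MinimalIdempotent.

Lemma maxsubgroup_divides : exists (V' : {set Gam}) (psi : Gam -> S),
  [/\ op_closed *%g V', {in V', forall u, psi u \in maxsubgroup op e},
      {in V' &, forall u v, psi (u * v) = op (psi u) (psi v)} &
      forall y, y \in maxsubgroup op e -> exists2 u, u \in V' & psi u = y].
Proof.
have [F [FM FF Fmin]] := exists_min_weight_idem.
exists [set u | normalizes_min_idem F u && (coset_tuple F u \in M)].
exists (fun u => phi (coset_tuple F u)).
split; first exact: cosets_closed.
- by move=> u; rewrite mem_cosets mem_preim => /andP[_ /andP[]].
- move=> u v; rewrite !mem_cosets => /andP[_ uM] /andP[vN vM].
  by rewrite coset_tupleM // phiM //; [move: uM | move: vM]; rewrite mem_preim => /andP[].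
- exact: cosets_onto.
Qed.

End MaxSubgroupDivision.

Theorem block_sdivides_cover (S : finType) (op : S -> S -> S) (n : nat)
    (Gs : 'I_n -> finGroupType) (Gam : finGroupType) (pi : forall i, Gam -> Gs i) :
  associative op -> covers_product pi -> sdivides op (@powprod_op n Gs) ->
  forall x, x \in grpU op -> sdivides (@block_op S op x) (@mul Gam).
Proof.
move=> opA piP [V [Vc [phi [phiM phi_onto]]]] x xU.
have swap : idem_swap_power op.
  exact: (idem_swap_power_div (@powprod_opA n Gs) Vc phiM phi_onto)
           (@powprod_idem_swap n Gs).
have [e ee xH] := grpU_maxsubgroup xU.
have TH := blockT_sub_maxsubgroup opA swap ee xH.
have [V' [psi [V'c psiH psiM psi_onto]]] := maxsubgroup_divides opA Vc phiM phi_onto piP ee.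
have [u0 u0V psi_u0] := psi_onto x xH.
apply: (@block_sdivides _ _ _ _ _ [set u in V' | psi u \in blockT op x] psi u0).
- by rewrite inE u0V psi_u0 mem_blockT.
- apply/op_closedP => u v; rewrite !inE => /andP[uV uT] /andP[vV vT].
  by rewrite (op_closedM V'c) // psiM // gen_subsemigroup_closed.
- by move=> y /(subsetP TH) yH; apply: (maxsubgroup_greenD opA xH yH).
- by move=> u; rewrite inE => /andP[].
- by move=> u v; rewrite !inE => /andP[uV _] /andP[vV _]; apply: psiM.
- move=> y yT; have [u uV uy] := psi_onto y (subsetP TH _ yT).
  by exists u; rewrite // inE uV uy yT.
Qed.

Lemma pseudovariety_covers_product (H : finGroupType -> Prop) :
  group_pseudovariety H -> forall n (Gs : 'I_n -> finGroupType), (forall i, H (Gs i)) ->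
  exists (Gam : finGroupType) (pi : forall i, Gam -> Gs i), H Gam /\ covers_product pi.
Proof.
case=> [[G0 HG0] _ Hprod]; elim=> [|n IH] Gs HGs.
  exists G0, (fun i : 'I_0 => False_rect _ (notF (ltn_ord i))).
  by split=> //; split=> [[]|g] //; exists 1 => -[].
have [Gam' [pi' [HGam' [pi'M pi'_onto]]]] :=
  IH (fun j => Gs (lift ord0 j)) (fun j => HGs _).
pose pi (i : 'I_n.+1) (u : Gs ord0 * Gam') : Gs i :=
  match unliftP ord0 i with
  | UnliftSome j E => eq_rect_r Gs (pi' j u.2) E
  | UnliftNone E => eq_rect_r Gs u.1 E
  end.
exists (Gs ord0 * Gam')%type, pi; split; first exact: Hprod.
split=> [i a b | g].
  by rewrite /pi; case: (unliftP ord0 i) => [j|] E; subst i => /=; rewrite ?pi'M.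
have [u ug] := pi'_onto (fun j => g (lift ord0 j)).
by exists (g ord0, u) => i; rewrite /pi; case: (unliftP ord0 i) => [j|] E; subst i => /=.
Qed.

Lemma group_covers_itself (gT : finGroupType) :
  covers_product (fun (_ : 'I_1) (u : gT) => u).
Proof. by split=> // g; exists (g ord0) => i; rewrite (ord1 i). Qed.

Lemma pow_sdivides_powprod1 (gT : finGroupType) :
  sdivides (@pow_op gT) (@powprod_op 1 (fun _ => gT)).
Proof.
exists setT; split; first by apply/op_closedP.
exists (fun w : powprod_car (fun _ : 'I_1 => gT) => w ord0).
split=> [u v _ _ | A]; first by rewrite ffunE.
by exists [ffun _ => A]; rewrite ?inE ?ffunE.
Qed.

Theorem mainTheorem2 :
  (forall (gT : finGroupType) (X : {set gT}),
      X \in grpU (@pow_op gT) ->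
      sdivides (@block_op {set gT} (@pow_op gT) X) (@mulg gT)) /\
  (forall H : finGroupType -> Prop, group_pseudovariety H ->
     forall (S : finType) (op : S -> S -> S), associative op ->
       inPH H op -> inBH H op).
Proof.
split=> [gT | H pvH S op opA [n [Gs [HGs div]]] x xU].
  apply: block_sdivides_cover (group_covers_itself gT) (pow_sdivides_powprod1 gT).
  exact: mulgA.
have [Gam [pi [HGam piP]]] := pseudovariety_covers_product pvH HGs.
by exists Gam; split=> //; apply: block_sdivides_cover opA piP div x xU.
Qed.
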